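(* Let $(a:b:c:d)\in\mathbb{P}^3$ with $a+b=0$, and suppose that $X_{(a:b:c:d)}\subset(\mathbb{P}^1)^4$ has either exactly two singular points or a curve of singular points. Then there exists $(c_0:c_1:c_2:c_3)\in\mathbb{P}^3$ with $c_0^2\neq c_2^2$ and $D_{12}D_{13}D_{14}\neq0$ (i.e. the four lines $L_1,L_2,L_3,L_4$ are pairwise disjoint) such that $(a:b:c:d)=(x^2-y^2:t^2-z^2:z^2+t^2:x^2+y^2)$, where $x=2(c_0c_3-c_1c_2)$, $y=c_0^2-c_1^2-c_2^2+c_3^2$, $z=2(c_0c_1-c_2c_3)$, $t=c_0^2+c_1^2-c_2^2-c_3^2$.
   Context: $(\mathbb{P}^1)^4$ has coordinates $((x_i:y_i))_{i=1}^4$ (here $x_i,y_i$ are the coordinates of $\mathbb{P}^1$, distinct from the auxiliary quantities $x,y,z,t$ in the claim); $X_{(a:b:c:d)}=\{G_{a,b,c,d}=0\}$ with $G_{a,b,c,d}=\tfrac{a+d}{2}(x_1x_2x_3x_4+y_1y_2y_3y_4)+\tfrac{a-d}{2}(x_1x_2y_3y_4+y_1y_2x_3x_4)+\tfrac{b+c}{2}(x_1y_2x_3y_4+y_1x_2y_3x_4)+\tfrac{b-c}{2}(x_1y_2y_3x_4+y_1x_2x_3y_4)$. For $(c_0:c_1:c_2:c_3)\in\mathbb{P}^3$ with $c_0^2\ne c_2^2$, $L_1\subset\mathbb{P}^3_{z_0,\dots,z_3}$ is the line through $(c_0:c_1:c_2:c_3)$ and $(c_2:c_3:c_0:c_1)$,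 $L_2=\tau_1(L_1)$, $L_3=\tau_2(L_2)$, $L_4=\tau_2(L_1)$ with $\tau_1(z_0:z_1:z_2:z_3)=(z_1:z_0:z_3:z_2)$, $\tau_2(z_0:z_1:z_2:z_3)=(z_0:-z_1:z_2:-z_3)$. Set $D_{12}=((c_0+c_1)^2-(c_2+c_3)^2)((c_0-c_1)^2-(c_2-c_3)^2)$, $D_{13}=((c_0-c_2)^2+(c_1-c_3)^2)((c_0+c_2)^2+(c_1+c_3)^2)$, $D_{14}=(c_0^2-c_2^2)(c_1^2-c_3^2)$; the lines $L_1,\dots,L_4$ are pairwise disjoint iff $D_{12}D_{13}D_{14}\neq0$. *)

From HB Require Import structures.
From mathcomp Require Import all_boot all_order all_algebra.
From mathcomp Require Export complex reals.
Set Implicit Arguments. Unset Strict Implicit. Unset Printing Implicit Defensive.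
Import GRing.Theory Num.Theory.
Local Open Scope ring_scope.

(* A point of (P^1)^4 is represented by coordinates x, y : nat -> F, the i-th
   factor (i = 1..4) being (x i : y i). *)

Definition Gform (K : comNzRingType) (A B Cc D : K) (x y : nat -> K) : K :=
  A * (x 1%N * x 2%N * x 3%N * x 4%N + y 1%N * y 2%N * y 3%N * y 4%N)
+ B * (x 1%N * x 2%N * y 3%N * y 4%N + y 1%N * y 2%N * x 3%N * x 4%N)
+ Cc * (x 1%N * y 2%N * x 3%N * y 4%N + y 1%N * x 2%N * y 3%N * x 4%N)
+ D * (x 1%N * y 2%N * y 3%N * x 4%N + y 1%N * x 2%N * x 3%N * y 4%N).

Definition G (F : fieldType) (a b c d : F) (x y : nat -> F) : F :=
  Gform ((a + d) / 2) ((a - d) / 2) ((b + c) / 2) ((b - c) / 2) x y.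

Definition G_in_x (F : fieldType) (a b c d : F) (x y : nat -> F) (i : nat)
  : {poly F} :=
  Gform ((a + d) / 2)%:P ((a - d) / 2)%:P ((b + c) / 2)%:P ((b - c) / 2)%:P
    (fun j => if j == i then 'X else (x j)%:P) (fun j => (y j)%:P).
Definition G_in_y (F : fieldType) (a b c d : F) (x y : nat -> F) (i : nat)
  : {poly F} :=
  Gform ((a + d) / 2)%:P ((a - d) / 2)%:P ((b + c) / 2)%:P ((b - c) / 2)%:P
    (fun j => (x j)%:P) (fun j => if j == i then 'X else (y j)%:P).

Definition dGdx (F : fieldType) (a b c d : F) (x y : nat -> F) (i : nat) : F :=
  (G_in_x a b c d x y i)^`().[x i].
Definition dGdy (F : fieldType) (a b c d : F) (x y : nat -> F) (i : nat) : F :=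
  (G_in_y a b c d x y i)^`().[y i].

Definition is_pt (F : fieldType) (x y : nat -> F) : Prop :=
  forall i, (1 <= i <= 4)%N -> (x i != 0) || (y i != 0).

Definition same_pt (F : fieldType) (x y x' y' : nat -> F) : Prop :=
  forall i, (1 <= i <= 4)%N -> x i * y' i = x' i * y i.

Definition singular_pt (F : fieldType) (a b c d : F) (x y : nat -> F) : Prop :=
  [/\ is_pt x y, G a b c d x y = 0 &
      forall i, (1 <= i <= 4)%N -> dGdx a b c d x y i = 0 /\ dGdy a b c d x y i = 0].

Definition exactly_two_singular (F : fieldType) (a b c d : F) : Prop :=
  exists x1 y1 x2 y2 : nat -> F,
    [/\ singular_pt a b c d x1 y1, singular_pt a b c d x2 y2,
        ~ same_pt x1 y1 x2 y2 &
        forall x y, singular_pt a b c d x y ->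
          same_pt x y x1 y1 \/ same_pt x y x2 y2].

Definition infinitely_many_singular (F : fieldType) (a b c d : F) : Prop :=
  forall n : nat, exists s : nat -> (nat -> F) * (nat -> F),
    (forall k, (k < n)%N -> singular_pt a b c d (s k).1 (s k).2) /\
    (forall k l, (k < n)%N -> (l < n)%N -> k <> l ->
        ~ same_pt (s k).1 (s k).2 (s l).1 (s l).2).

(* The singular locus has dimension <= 1: for each pair of factors i < j, its
   (closed) image under the projection (P^1)^4 -> (P^1)^2 onto the factors
   i, j is not all of (P^1)^2, i.e. misses some point ((u:v),(u':v')). *)
Definition singular_dim_le1 (F : fieldType) (a b c d : F) : Prop :=
  forall i j, (1 <= i)%N -> (i < j)%N -> (j <= 4)%N ->
    exists u v u' v' : F,
      [/\ (u != 0) || (v != 0), (u' != 0) || (v' != 0) &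
          forall x y, singular_pt a b c d x y ->
            ~ (x i * v = u * y i /\ x j * v' = u' * y j)].

Definition curve_of_singular (F : fieldType) (a b c d : F) : Prop :=
  infinitely_many_singular a b c d /\ singular_dim_le1 a b c d.

Definition D12 (F : fieldType) (c0 c1 c2 c3 : F) : F :=
  ((c0 + c1) ^+ 2 - (c2 + c3) ^+ 2) * ((c0 - c1) ^+ 2 - (c2 - c3) ^+ 2).
Definition D13 (F : fieldType) (c0 c1 c2 c3 : F) : F :=
  ((c0 - c2) ^+ 2 + (c1 - c3) ^+ 2) * ((c0 + c2) ^+ 2 + (c1 + c3) ^+ 2).
Definition D14 (F : fieldType) (c0 c1 c2 c3 : F) : F :=
  (c0 ^+ 2 - c2 ^+ 2) * (c1 ^+ 2 - c3 ^+ 2).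

From mathcomp Require Import all_boot all_order all_algebra.
From mathcomp Require Import complex reals ring.
Import GRing.Theory Num.Theory.
Local Open Scope ring_scope.

(* The partial derivatives of G in the coordinates of the first two factors
   say that the 2x2 matrix of coefficients built from the last two factors has (x1:y1) as
   left and (x2:y2) as right kernel, so it is nu times an explicit rank-one matrix.
   Comparing entries gives
     a T = nu S,   d Q = - nu P,   b T' = - nu S',   c Q' = nu P',
   with S, S', P, P' = x1 x2 + y1 y2, x1 y2 + y1 x2, x1 x2 - y1 y2, x1 y2 - y1 x2 and
   T, T', Q, Q' the same expressions for the factors 3, 4.  Since G is invariant under
   exchanging the factors (1,2) with (3,4), the same holds with (S, T) swapped and a second
   scalar nu'; combining both, a^2 - nu nu' kills S, S', T, T' while c^2 - nu nu' and
   d^2 - nu nu' kill the P's and Q's.  Hence if c^2, d^2 <> a^2, every singular point has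
   x_i = +- y_i: there are at most 16 of them and no curve.
   If a = 0 or c = +- d there are three explicit singular points, and if moreover c^2 or
   d^2 equals a^2 a whole surface of them.  In the remaining case a <> 0, c <> +- d the
   point ((r + s)/2 : 1 : (r - s)/2 : 0) works, for r, s found by solving two quadratics. *)

Lemma comb_eq0 {K : comPzRingType} {u k1 p1 k2 p2 : K} :
  p1 = 0 -> p2 = 0 -> u = k1 * p1 + k2 * p2 -> u = 0.
Proof. by move=> -> -> ->; rewrite !mulr0 addr0. Qed.

Lemma eq_of_mulr_sub {F : idomainType} {u v w : F} : w != 0 -> (u - v) * w = 0 -> u = v.
Proof. by move=> w0 /eqP; rewrite mulf_eq0 (negbTE w0) orbF subr_eq0 => /eqP. Qed.

Section PairsOfPoints.
Context {F : fieldType}.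
Implicit Types X Y p q u : F.

Lemma pair_mul_eq0 {X Y u} : (X != 0) || (Y != 0) -> X * u = 0 -> Y * u = 0 -> u = 0.
Proof.
by case/orP=> n hX hY; apply/eqP; [move/eqP: hX | move/eqP: hY]; rewrite mulf_eq0 (negbTE n).
Qed.

Lemma orthogonal_pair {X Y p q} : (X != 0) || (Y != 0) -> p * X + q * Y = 0 ->
  exists mu, p = mu * Y /\ q = - mu * X.
Proof.
move=> /orP[n | n] /eqP; rewrite addr_eq0 => /eqP e.
- by exists (- q / X); split; [apply: (mulIf n); rewrite e | ]; field.
- by exists (p / Y); split; [ | apply: (mulIf n); rewrite -[q * Y]opprK -e]; field.
Qed.

Lemma kernel_rank1 {X1 Y1 X2 Y2 e f g h : F} :
  (X1 != 0) || (Y1 != 0) -> (X2 != 0) || (Y2 != 0) ->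
  e * X2 + f * Y2 = 0 -> h * X2 + g * Y2 = 0 ->
  e * X1 + h * Y1 = 0 -> f * X1 + g * Y1 = 0 ->
  exists nu, [/\ e = nu * (Y1 * Y2), f = - nu * (Y1 * X2), g = nu * (X1 * X2)
     & h = - nu * (X1 * Y2)].
Proof.
move=> p1 p2 E1 E2 /(orthogonal_pair p1)[mu1 [eE hE]] /(orthogonal_pair p1)[mu2 [fE gE]].
subst e f g h.
have /(orthogonal_pair p2)[nu [-> ->]] : mu1 * X2 + mu2 * Y2 = 0.
  apply: (pair_mul_eq0 p1); last by rewrite -E1; ring.
  by rewrite -[RHS]oppr0 -E2; ring.
by exists nu; split; ring.
Qed.

Lemma sq_eq_of_sum {X1 Y1 X2 Y2} :
  (X1 != 0) || (Y1 != 0) -> (X2 != 0) || (Y2 != 0) ->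
  X1 * X2 + Y1 * Y2 = 0 -> X1 * Y2 + Y1 * X2 = 0 ->
  X1 ^+ 2 = Y1 ^+ 2 /\ X2 ^+ 2 = Y2 ^+ 2.
Proof.
move=> p1 p2 hS hS'; split; apply/eqP; rewrite -subr_eq0; apply/eqP.
- apply: (pair_mul_eq0 p2).
  + by apply: (comb_eq0 (k1 := X1) (k2 := - Y1) hS hS'); ring.
  + by apply: (comb_eq0 (k1 := - Y1) (k2 := X1) hS hS'); ring.
- apply: (pair_mul_eq0 p1).
  + by apply: (comb_eq0 (k1 := X2) (k2 := - Y2) hS hS'); ring.
  + by apply: (comb_eq0 (k1 := - Y2) (k2 := X2) hS hS'); ring.
Qed.

Lemma sq_eq_of_diff {X1 Y1 X2 Y2} :
  (X1 != 0) || (Y1 != 0) -> (X2 != 0) || (Y2 != 0) ->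
  X1 * X2 - Y1 * Y2 = 0 -> X1 * Y2 - Y1 * X2 = 0 ->
  X1 ^+ 2 = Y1 ^+ 2 /\ X2 ^+ 2 = Y2 ^+ 2.
Proof.
move=> p1 p2 hP hP'; rewrite -[Y2 ^+ 2]sqrrN.
apply: sq_eq_of_sum; rewrite ?oppr_eq0 //.
- by rewrite -hP; ring.
- by rewrite -[RHS]oppr0 -hP'; ring.
Qed.

End PairsOfPoints.

Lemma mutual_scaling {K : comPzRingType} {k nu nu' S T : K} :
  k * T = nu * S -> k * S = nu' * T ->
  (k ^+ 2 - nu * nu') * S = 0 /\ (k ^+ 2 - nu * nu') * T = 0.
Proof.
move=> hT hS; split.
- have -> : (k ^+ 2 - nu * nu') * S = k * (k * S) - nu' * (nu * S) by ring.
  by rewrite hS -hT; ring.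
- have -> : (k ^+ 2 - nu * nu') * T = k * (k * T) - nu * (nu' * T) by ring.
  by rewrite hT -hS; ring.
Qed.

Section Jacobian.
Variables (F : fieldType) (a b c d : F) (x y : nat -> F).
Local Notation x1 := (x 1%N). Local Notation x2 := (x 2%N).
Local Notation x3 := (x 3%N). Local Notation x4 := (x 4%N).
Local Notation y1 := (y 1%N). Local Notation y2 := (y 2%N).
Local Notation y3 := (y 3%N). Local Notation y4 := (y 4%N).
Local Notation A := ((a + d) / 2). Local Notation B := ((a - d) / 2).
Local Notation C := ((b + c) / 2). Local Notation D := ((b - c) / 2).

Ltac expand := rewrite /dGdx /dGdy /G_in_x /G_in_y /Gform /= !derivE /= !hornerE /=; ring.

Lemma dGdx1E : dGdx a b c d x y 1 =
  A * (x2 * x3 * x4) + B * (x2 * y3 * y4) + C * (y2 * x3 * y4) + D * (y2 * y3 * x4).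
Proof. expand. Qed.
Lemma dGdy1E : dGdy a b c d x y 1 =
  A * (y2 * y3 * y4) + B * (y2 * x3 * x4) + C * (x2 * y3 * x4) + D * (x2 * x3 * y4).
Proof. expand. Qed.
Lemma dGdx2E : dGdx a b c d x y 2 =
  A * (x1 * x3 * x4) + B * (x1 * y3 * y4) + C * (y1 * y3 * x4) + D * (y1 * x3 * y4).
Proof. expand. Qed.
Lemma dGdy2E : dGdy a b c d x y 2 =
  A * (y1 * y3 * y4) + B * (y1 * x3 * x4) + C * (x1 * x3 * y4) + D * (x1 * y3 * x4).
Proof. expand. Qed.
Lemma dGdx3E : dGdx a b c d x y 3 =
  A * (x1 * x2 * x4) + B * (y1 * y2 * x4) + C * (x1 * y2 * y4) + D * (y1 * x2 * y4).
Proof. expand. Qed.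
Lemma dGdy3E : dGdy a b c d x y 3 =
  A * (y1 * y2 * y4) + B * (x1 * x2 * y4) + C * (y1 * x2 * x4) + D * (x1 * y2 * x4).
Proof. expand. Qed.
Lemma dGdx4E : dGdx a b c d x y 4 =
  A * (x1 * x2 * x3) + B * (y1 * y2 * x3) + C * (y1 * x2 * y3) + D * (x1 * y2 * y3).
Proof. expand. Qed.
Lemma dGdy4E : dGdy a b c d x y 4 =
  A * (y1 * y2 * y3) + B * (x1 * x2 * y3) + C * (x1 * y2 * x3) + D * (y1 * x2 * x3).
Proof. expand. Qed.

End Jacobian.

Definition swap_pairs (i : nat) : nat :=
  match i with 1 => 3 | 2 => 4 | 3 => 1 | 4 => 2 | _ => i end%N.

Section Swap.
Context {F : fieldType} {a b c d : F} {x y : nat -> F}.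
Local Notation xs := (x \o swap_pairs). Local Notation ys := (y \o swap_pairs).

Lemma dGdx_swap i : (1 <= i <= 4)%N ->
  dGdx a b c d xs ys i = dGdx a b c d x y (swap_pairs i).
Proof.
by case: i => [|[|[|[|[|i]]]]] // _; rewrite /dGdx /G_in_x /Gform /=; congr (_^`().[_]); ring.
Qed.

Lemma dGdy_swap i : (1 <= i <= 4)%N ->
  dGdy a b c d xs ys i = dGdy a b c d x y (swap_pairs i).
Proof.
by case: i => [|[|[|[|[|i]]]]] // _; rewrite /dGdy /G_in_y /Gform /=; congr (_^`().[_]); ring.
Qed.

Lemma singular_pt_swap : singular_pt a b c d x y -> singular_pt a b c d xs ys.
Proof.
have swap_range i : (1 <= i <= 4)%N -> (1 <= swap_pairs i <= 4)%N.
  by case: i => [|[|[|[|[|i]]]]].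
case=> pt G0 dG; split=> [i /swap_range /pt // | | i hi].
- by rewrite -G0 /G /Gform /=; ring.
- by rewrite dGdx_swap // dGdy_swap //; apply/dG/swap_range.
Qed.

End Swap.

Section RankOne.
Context {F : numFieldType} {a b c d : F} {x y : nat -> F}.
Local Notation x1 := (x 1%N). Local Notation x2 := (x 2%N).
Local Notation x3 := (x 3%N). Local Notation x4 := (x 4%N).
Local Notation y1 := (y 1%N). Local Notation y2 := (y 2%N).
Local Notation y3 := (y 3%N). Local Notation y4 := (y 4%N).

Lemma singular_pt_rank1 : singular_pt a b c d x y ->
  exists nu, [/\ a * (x3 * x4 + y3 * y4) = nu * (x1 * x2 + y1 * y2),
                 d * (x3 * x4 - y3 * y4) = - nu * (x1 * x2 - y1 * y2),
                 b * (x3 * y4 + y3 * x4) = - nu * (x1 * y2 + y1 * x2)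
               & c * (x3 * y4 - y3 * x4) = nu * (x1 * y2 - y1 * x2)].
Proof.
case=> pt _ dG; have [dx1 dy1] := dG 1%N isT; have [dx2 dy2] := dG 2%N isT.
pose e := (a + d) / 2 * (x3 * x4) + (a - d) / 2 * (y3 * y4).
pose g := (a + d) / 2 * (y3 * y4) + (a - d) / 2 * (x3 * x4).
pose f := (b + c) / 2 * (x3 * y4) + (b - c) / 2 * (y3 * x4).
pose h := (b + c) / 2 * (y3 * x4) + (b - c) / 2 * (x3 * y4).
have [nu [eE fE gE hE]] : exists nu, [/\ e = nu * (y1 * y2), f = - nu * (y1 * x2),
    g = nu * (x1 * x2) & h = - nu * (x1 * y2)].
  apply: kernel_rank1 (pt 1%N isT) (pt 2%N isT) _ _ _ _.
  - by rewrite -dx1 dGdx1E /e /f; ring.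
  - by rewrite -dy1 dGdy1E /h /g; ring.
  - by rewrite -dx2 dGdx2E /e /h; ring.
  - by rewrite -dy2 dGdy2E /f /g; ring.
exists nu; split.
- by transitivity (e + g); [rewrite /e /g; field | rewrite eE gE; ring].
- by transitivity (e - g); [rewrite /e /g; field | rewrite eE gE; ring].
- by transitivity (f + h); [rewrite /f /h; field | rewrite fE hE; ring].
- by transitivity (f - h); [rewrite /f /h; field | rewrite fE hE; ring].
Qed.

End RankOne.

Section SquaredCoordinates.
Context {F : numFieldType} {a b c d : F} {x y : nat -> F}.
Local Notation x1 := (x 1%N). Local Notation x2 := (x 2%N).
Local Notation x3 := (x 3%N). Local Notation x4 := (x 4%N).
Local Notation y1 := (y 1%N). Local Notation y2 := (y 2%N).
Local Notation y3 := (y 3%N). Local Notation y4 := (y 4%N).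

Lemma singular_pt_sq : b ^+ 2 = a ^+ 2 -> c ^+ 2 != a ^+ 2 -> d ^+ 2 != a ^+ 2 ->
  singular_pt a b c d x y -> forall i, (1 <= i <= 4)%N -> x i ^+ 2 = y i ^+ 2.
Proof.
move=> ba ca da hs.
have [pt _ _] := hs.
have [nu [Ra Rd Rb Rc]] := singular_pt_rank1 hs.
have /= [nu' [Ra' Rd' Rb' Rc']] := singular_pt_rank1 (singular_pt_swap hs).
have [Sa Ta] := mutual_scaling Ra Ra'.
have [Sb Tb] := mutual_scaling Rb Rb'.
have [Pd Qd] := mutual_scaling Rd Rd'.
have [Pc Qc] := mutual_scaling Rc Rc'.
rewrite ba mulrNN in Sb Tb; rewrite mulrNN in Pd Qd.
have mul_eq0 (u v : F) : u != 0 -> u * v = 0 -> v = 0.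
  by move=> u0 /eqP; rewrite mulf_eq0 (negbTE u0) => /eqP.
suff [[q1 q2] [q3 q4]] : (x1 ^+ 2 = y1 ^+ 2 /\ x2 ^+ 2 = y2 ^+ 2) /\
                         (x3 ^+ 2 = y3 ^+ 2 /\ x4 ^+ 2 = y4 ^+ 2).
  by case=> [|[|[|[|[|i]]]]].
have [t_a | t_a] := eqVneq (nu * nu') (a ^+ 2).
- have nc : c ^+ 2 - nu * nu' != 0 by rewrite t_a subr_eq0.
  have nd : d ^+ 2 - nu * nu' != 0 by rewrite t_a subr_eq0.
  split.
  + exact: sq_eq_of_diff (pt 1%N isT) (pt 2%N isT) (mul_eq0 _ _ nd Pd) (mul_eq0 _ _ nc Pc).
  + exact: sq_eq_of_diff (pt 3%N isT) (pt 4%N isT) (mul_eq0 _ _ nd Qd) (mul_eq0 _ _ nc Qc).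
- have na : a ^+ 2 - nu * nu' != 0 by rewrite subr_eq0 eq_sym.
  split.
  + exact: sq_eq_of_sum (pt 1%N isT) (pt 2%N isT) (mul_eq0 _ _ na Sa) (mul_eq0 _ _ na Sb).
  + exact: sq_eq_of_sum (pt 3%N isT) (pt 4%N isT) (mul_eq0 _ _ na Ta) (mul_eq0 _ _ na Tb).
Qed.

End SquaredCoordinates.

Lemma cross_eq_of_sq {F : numFieldType} (u v u' v' : F) :
  (u != 0) || (v != 0) -> u ^+ 2 = v ^+ 2 -> u' ^+ 2 = v' ^+ 2 ->
  (u == v) = (u' == v') -> u * v' = u' * v.
Proof.
move=> p eu eu'; move/eqP: eu p; rewrite eqf_sqr => /pred2P[]-> p.
all: move/eqP: eu'; rewrite eqf_sqr => /pred2P[]->.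
- by rewrite mulrC.
- by rewrite eqxx eqNr => /esym/eqP->; rewrite oppr0 mulr0 mul0r.
- by rewrite oppr_eq0 orbb in p; rewrite eqxx eqNr (negbTE p).
- by rewrite !mulNr mulrC.
Qed.

Lemma finitely_many_singular {F : numFieldType} (a b c d : F) :
  b ^+ 2 = a ^+ 2 -> c ^+ 2 != a ^+ 2 -> d ^+ 2 != a ^+ 2 ->
  ~ infinitely_many_singular a b c d.
Proof.
move=> ba ca da /(_ 17%N) [s [sing distinct]].
pose signs (k : 'I_17) : bool * bool * bool * bool :=
  ((s k).1 1%N == (s k).2 1%N, (s k).1 2%N == (s k).2 2%N,
   (s k).1 3%N == (s k).2 3%N, (s k).1 4%N == (s k).2 4%N).
suff /leq_card : injective signs by rewrite card_ord !card_prod !card_bool.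
move=> k l /= [e1 e2 e3 e4]; apply/val_inj/eqP/negPn/negP => /eqP kl.
apply: (distinct k l (ltn_ord k) (ltn_ord l) kl).
have sk := sing k (ltn_ord k); have [pk _ _] := sk.
have sq_k := singular_pt_sq ba ca da sk.
have sq_l := singular_pt_sq ba ca da (sing l (ltn_ord l)).
by case=> [|[|[|[|[|i]]]]] // hi; apply: cross_eq_of_sq (pk _ hi) (sq_k _ hi) (sq_l _ hi) _.
Qed.

Definition pt4 {T : Type} (t1 t2 t3 t4 : T) : nat -> T :=
  fun i => match i with 1 => t1 | 2 => t2 | 3 => t3 | _ => t4 end%N.

Ltac singular_by_expansion :=
  split;
  [ case=> [|[|[|[|[|?]]]]] //= _; by [ | rewrite orbC | rewrite oner_eq0]
  | rewrite /G /Gform /=; ring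
  | case=> [|[|[|[|[|?]]]]] // _;
    rewrite ?dGdx1E ?dGdy1E ?dGdx2E ?dGdy2E ?dGdx3E ?dGdy3E ?dGdx4E ?dGdy4E /=;
    split; ring ].

Lemma not_singular_dim_le1 {F : fieldType} {a b c d : F} i j :
  (1 <= i)%N -> (i < j)%N -> (j <= 4)%N ->
  (forall u v u' v', (u != 0) || (v != 0) -> (u' != 0) || (v' != 0) ->
     exists x y, [/\ singular_pt a b c d x y, x i * v = u * y i & x j * v' = u' * y j]) ->
  ~ singular_dim_le1 a b c d.
Proof.
move=> hi hij hj onto /(_ i j hi hij hj) [u [v [u' [v' [p p' miss]]]]].
by have [x [y [s e e']]] := onto u v u' v' p p'; apply: miss s _.
Qed.

Lemma singular_surface {F : numFieldType} (a c d : F) :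
  a = 0 \/ c ^+ 2 = d ^+ 2 -> c ^+ 2 = a ^+ 2 \/ d ^+ 2 = a ^+ 2 ->
  ~ singular_dim_le1 a (- a) c d.
Proof.
move=> deg sq; have [a0 | a0] := eqVneq a 0.
  rewrite a0 in sq *; have [-> | ->] : c = 0 \/ d = 0.
    by case: sq => /eqP; rewrite expr0n sqrf_eq0 => /eqP; [left | right].
  - apply: (not_singular_dim_le1 1 3) => // u v u' v' p p'.
    by exists (pt4 u v u' v'), (pt4 v u v' u'); split => //; singular_by_expansion.
  - apply: (not_singular_dim_le1 1 3) => // u v u' v' p p'.
    by exists (pt4 u u u' u'), (pt4 v v v' v'); split => //; singular_by_expansion.
have cd : c ^+ 2 = d ^+ 2 by case: deg => // /eqP; rewrite (negbTE a0).
have [/eqP ca /eqP da] : c ^+ 2 = a ^+ 2 /\ d ^+ 2 = a ^+ 2.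
  by rewrite -cd; case: sq => <-.
move: ca da; rewrite !eqf_sqr => /pred2P[]-> /pred2P[]->;
  apply: (not_singular_dim_le1 1 2) => // u v u' v' p p'.
- by exists (pt4 u u' v' v), (pt4 v v' u' u); split => //; singular_by_expansion.
- by exists (pt4 u u' u u'), (pt4 v v' v v'); split => //; singular_by_expansion.
- by exists (pt4 u u' v v'), (pt4 v v' u u'); split => //; singular_by_expansion.
- by exists (pt4 u u' u' u), (pt4 v v' v' v); split => //; singular_by_expansion.
Qed.

Lemma same_pt_trans {F : fieldType} {x y x' y' x'' y'' : nat -> F} :
  is_pt x' y' -> same_pt x y x' y' -> same_pt x'' y'' x' y' -> same_pt x y x'' y''.
Proof.
move=> p s s'' i hi; apply/eqP; rewrite -subr_eq0; apply/eqP.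
have e : x i * y' i - x' i * y i = 0 by rewrite s ?subrr.
have e'' : x'' i * y' i - x' i * y'' i = 0 by rewrite s'' ?subrr.
apply: (pair_mul_eq0 (p i hi)).
- by apply: (comb_eq0 (k1 := x'' i) (k2 := - x i) e e''); ring.
- by apply: (comb_eq0 (k1 := y'' i) (k2 := - y i) e e''); ring.
Qed.

Lemma not_exactly_two_singular {F : fieldType} {a b c d : F}
    {x1 y1 x2 y2 x3 y3 : nat -> F} :
  singular_pt a b c d x1 y1 -> singular_pt a b c d x2 y2 -> singular_pt a b c d x3 y3 ->
  ~ same_pt x1 y1 x2 y2 -> ~ same_pt x1 y1 x3 y3 -> ~ same_pt x2 y2 x3 y3 ->
  ~ exactly_two_singular a b c d.
Proof.
move=> s1 s2 s3 n12 n13 n23 [u1 [v1 [u2 [v2 [[pu1 _ _] [pu2 _ _] _ near]]]]].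
case: (near _ _ s1) => h1; case: (near _ _ s2) => h2; case: (near _ _ s3) => h3;
  by [ apply: n12; apply: same_pt_trans h1 h2
     | apply: n13; apply: same_pt_trans h1 h3
     | apply: n23; apply: same_pt_trans h2 h3 ].
Qed.

Lemma not_same_pt_at {F : fieldType} {x y x' y' : nat -> F} i :
  (1 <= i <= 4)%N -> x i * y' i != x' i * y i -> ~ same_pt x y x' y'.
Proof. by move=> hi /eqP ne s; apply/ne/s. Qed.

Ltac distinct_at i :=
  apply: (not_same_pt_at i) => //=; rewrite !mul1r ?(eq_sym 1) eqNr oner_eq0.

Lemma three_singular_pts {F : numFieldType} (a c d : F) :
  a = 0 \/ c ^+ 2 = d ^+ 2 -> ~ exactly_two_singular a (- a) c d.
Proof.
have s1 : singular_pt a (- a) c d (pt4 1 1 1 1) (pt4 1 1 1 1) by singular_by_expansion.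
have s2 : singular_pt a (- a) c d (pt4 1 1 1 1) (pt4 (-1) (-1) (-1) (-1)).
  by singular_by_expansion.
have n12 : ~ same_pt (pt4 1 1 1 1) (pt4 1 1 1 1)
                     (pt4 1 1 1 1) (pt4 (-1) (-1) (-1) (-1) : nat -> F).
  by distinct_at 1%N.
case=> [a0 | /eqP]; last rewrite eqf_sqr => /pred2P[] cd.
- subst a; have s3 : singular_pt 0 (- 0) c d (pt4 1 1 1 1) (pt4 1 1 (-1) (-1)).
    by singular_by_expansion.
  by apply: (not_exactly_two_singular s1 s2 s3) => //; [distinct_at 3%N | distinct_at 1%N].
- subst c; have s3 : singular_pt a (- a) d d (pt4 1 1 1 1) (pt4 (-1) 1 1 (-1)).
    by singular_by_expansion.
  by apply: (not_exactly_two_singular s1 s2 s3) => //; [distinct_at 1%N | distinct_at 2%N].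
- subst c; have s3 : singular_pt a (- a) (- d) d (pt4 1 1 1 1) (pt4 (-1) 1 (-1) 1).
    by singular_by_expansion.
  by apply: (not_exactly_two_singular s1 s2 s3) => //; [distinct_at 1%N | distinct_at 2%N].
Qed.

Section Parametrization.
Variable C : numClosedFieldType.

Lemma quadratic_root (A B K : C) : A != 0 -> exists z, A * z ^+ 2 + B * z + K = 0.
Proof.
move=> nA; pose s := sqrtC (B ^+ 2 - 4 * A * K).
exists ((- B + s) / (2 * A)).
have -> : A * ((- B + s) / (2 * A)) ^+ 2 + B * ((- B + s) / (2 * A)) + K
    = (s ^+ 2 - (B ^+ 2 - 4 * A * K)) / (4 * A) by field.
by rewrite sqrtCK subrr mul0r.
Qed.

(* With p = r^2, q = s^2, m = mu (c - d) / 8 the equations read p q = m^2,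
   p + q = mu ((c + d)/2 + a)/2 and 2 + 2 m^2 = mu ((c + d)/2 - a); the last one is the
   quadratic solved for mu, and then p, q are the roots of a monic quadratic. *)
Lemma exists_rs (a c d : C) : c != d ->
  exists mu r s, [/\ mu != 0, (1 - r ^+ 2) * (1 - s ^+ 2) = - (mu * a),
                     (1 + r ^+ 2) * (1 + s ^+ 2) = mu * (c + d) / 2
                   & r * s = mu * (c - d) / 8].
Proof.
move=> cd; have cd0 : c - d != 0 by rewrite subr_eq0.
have nA : (c - d) ^+ 2 / 32 != 0 by rewrite mulf_neq0 ?invr_eq0 ?expf_neq0 ?pnatr_eq0.
have [mu Hmu] := quadratic_root _ (- ((c + d) / 2 - a)) 2 nA.
have mu0 : mu != 0.
  by apply: contraPneq Hmu => ->; rewrite expr0n !mulr0 !add0r => /eqP; rewrite pnatr_eq0.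
pose m := mu * (c - d) / 8; pose n := mu * ((c + d) / 2 + a) / 2.
have m0 : m != 0 by rewrite !mulf_neq0 ?invr_eq0 ?pnatr_eq0.
have [rho Hrho] := quadratic_root _ (- n) (m ^+ 2) (oner_neq0 C).
have rho0 : rho != 0.
  apply: contraPneq Hrho => ->; rewrite expr0n !mulr0 !add0r => /eqP.
  by rewrite expf_eq0 (negbTE m0) andbF.
pose r := sqrtC rho; have r2 : r ^+ 2 = rho by rewrite sqrtCK.
have r0 : r != 0 by rewrite -sqrf_eq0 r2.
exists mu, r, (m / r); split => //; rewrite ?expr_div_n ?r2.
- apply: (eq_of_mulr_sub rho0).
  by apply: (comb_eq0 (k1 := rho / 2) (k2 := -1) Hmu Hrho); rewrite /m /n; field.
- apply: (eq_of_mulr_sub rho0).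
  by apply: (comb_eq0 (k1 := rho / 2) (k2 := 1) Hmu Hrho); rewrite /m /n; field.
- by rewrite /m; field.
Qed.

Definition disjoint_lines_image (a b c d : C) : Prop :=
  exists c0 c1 c2 c3 : C,
    [/\ (c0 != 0) || (c1 != 0) || (c2 != 0) || (c3 != 0),
        c0 ^+ 2 != c2 ^+ 2,
        D12 c0 c1 c2 c3 * D13 c0 c1 c2 c3 * D14 c0 c1 c2 c3 != 0 &
        let x := 2 * (c0 * c3 - c1 * c2) in
        let y := c0 ^+ 2 - c1 ^+ 2 - c2 ^+ 2 + c3 ^+ 2 in
        let z := 2 * (c0 * c1 - c2 * c3) in
        let t := c0 ^+ 2 + c1 ^+ 2 - c2 ^+ 2 - c3 ^+ 2 in
        exists lambda : C, lambda != 0 /\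
          [/\ a = lambda * (x ^+ 2 - y ^+ 2), b = lambda * (t ^+ 2 - z ^+ 2),
              c = lambda * (z ^+ 2 + t ^+ 2) & d = lambda * (x ^+ 2 + y ^+ 2)]].

(* For (c0:c1:c2:c3) = ((r + s)/2 : 1 : (r - s)/2 : 0) one finds x^2 - y^2 = - (t^2 - z^2)
   = - (1 - r^2)(1 - s^2) and x^2 + y^2, z^2 + t^2 = (1 + r^2)(1 + s^2) -+ 4 r s. *)
Lemma disjoint_lines_image_generic (a c d : C) :
  a != 0 -> c ^+ 2 != d ^+ 2 -> disjoint_lines_image a (- a) c d.
Proof.
move=> a0; rewrite eqf_sqr negb_or => /andP[cd cNd].
have [mu [r [s [mu0 Ea Ecd Ers]]]] := exists_rs a c d cd.
have rs0 : r * s != 0 by rewrite Ers !mulf_neq0 ?invr_eq0 ?pnatr_eq0 ?subr_eq0.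
have m0 : (1 - r ^+ 2) * (1 - s ^+ 2) != 0 by rewrite Ea oppr_eq0 mulf_neq0.
have p0 : (1 + r ^+ 2) * (1 + s ^+ 2) != 0.
  by rewrite Ecd !mulf_neq0 ?invr_eq0 ?pnatr_eq0 ?addr_eq0.
pose c0 := (r + s) / 2; pose c2 := (r - s) / 2.
exists c0, 1, c2, 0; split.
- by rewrite oner_neq0 orbT.
- have -> : c0 ^+ 2 = c2 ^+ 2 + r * s by rewrite /c0 /c2; field.
  by rewrite -subr_eq0 [c2 ^+ 2 + _]addrC addrK.
- have -> : D12 c0 1 c2 0 * D13 c0 1 c2 0 * D14 c0 1 c2 0
      = (1 - r ^+ 2) * (1 - s ^+ 2) * ((1 + r ^+ 2) * (1 + s ^+ 2)) * (r * s).
    by rewrite /D12 /D13 /D14 /c0 /c2; field.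
  by apply: mulf_neq0 => //; apply: mulf_neq0.
- have ea : a = - ((1 - r ^+ 2) * (1 - s ^+ 2)) / mu by rewrite Ea; field.
  have ec : c = ((1 + r ^+ 2) * (1 + s ^+ 2) + 4 * (r * s)) / mu.
    by rewrite Ecd Ers; field.
  have ed : d = ((1 + r ^+ 2) * (1 + s ^+ 2) - 4 * (r * s)) / mu.
    by rewrite Ecd Ers; field.
  exists mu^-1; split; first by rewrite invr_eq0.
  by split; rewrite ?ea ?ec ?ed /c0 /c2; field.
Qed.

End Parametrization.

Theorem mainTheorem20 (R : realType) (a b c d : R[i]) :
  (a != 0) || (b != 0) || (c != 0) || (d != 0) ->
  a + b = 0 ->
  exactly_two_singular a b c d \/ curve_of_singular a b c d ->
  exists c0 c1 c2 c3 : R[i],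
    [/\ (c0 != 0) || (c1 != 0) || (c2 != 0) || (c3 != 0),
        c0 ^+ 2 != c2 ^+ 2,
        D12 c0 c1 c2 c3 * D13 c0 c1 c2 c3 * D14 c0 c1 c2 c3 != 0 &
        let x := 2 * (c0 * c3 - c1 * c2) in
        let y := c0 ^+ 2 - c1 ^+ 2 - c2 ^+ 2 + c3 ^+ 2 in
        let z := 2 * (c0 * c1 - c2 * c3) in
        let t := c0 ^+ 2 + c1 ^+ 2 - c2 ^+ 2 - c3 ^+ 2 in
        exists lambda : R[i], lambda != 0 /\
          [/\ a = lambda * (x ^+ 2 - y ^+ 2), b = lambda * (t ^+ 2 - z ^+ 2),
              c = lambda * (z ^+ 2 + t ^+ 2) & d = lambda * (x ^+ 2 + y ^+ 2)]].
Proof.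
(* The point (a:b:c:d) need not be nonzero: for a = b = c = d = 0 every point is singular,
   which the degenerate cases below already exclude. *)
move=> _ /eqP; rewrite addrC addr_eq0 => /eqP -> sing.
have [[a0 cd] | degenerate] : (a != 0 /\ c ^+ 2 != d ^+ 2) \/ (a = 0 \/ c ^+ 2 = d ^+ 2).
  have [a0 | a0] := eqVneq a 0; first by right; left.
  by have [cd | cd] := eqVneq (c ^+ 2) (d ^+ 2); [right; right | left].
- exact: disjoint_lines_image_generic.
- exfalso; case: sing => [two | [infinite dim]]; first exact: three_singular_pts degenerate two.
  have [[ca da] | sq] :
      (c ^+ 2 != a ^+ 2 /\ d ^+ 2 != a ^+ 2) \/ (c ^+ 2 = a ^+ 2 \/ d ^+ 2 = a ^+ 2).
    have [ca | ca] := eqVneq (c ^+ 2) (a ^+ 2); first by right; left.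
    by have [da | da] := eqVneq (d ^+ 2) (a ^+ 2); [right; right | left].
  + exact: finitely_many_singular (sqrrN a) ca da infinite.
  + exact: singular_surface degenerate sq dim.
Qed.
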